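(* Let $k\ge 0$. If $\mathcal{M}$ is a matroid whose base configuration $V_{\mathcal{M}}$ has Theta rank at most $k$, then every minor $\mathcal{N}$ of $\mathcal{M}$ has base configuration of Theta rank at most $k$. Likewise, if $V_{\mathcal{M}}$ has levelness at most $k$, then so does $V_{\mathcal{N}}$ for every minor $\mathcal{N}$ of $\mathcal{M}$.
   Context: For a matroid $\mathcal{M}=(E,\mathcal{B})$ with set of bases $\mathcal{B}$, the base configuration is $V_{\mathcal{M}}=\{\mathbf{1}_B:B\in\mathcal{B}\}\subset\mathbb{R}^E$ ($\mathbf{1}_B$ the characteristic vector). Minors are obtained by sequences of deletions and contractions (deleting a coloop $e$ gives bases $\{B\setminus e\}$; contracting a loop is defined dually). A point configuration is a finite set $V\subset\mathbb{R}^n$; a linear function means an affine function. A linear function $\ell$ nonnegative on $V$ is $k$-sos with respect to $V$ if $\ell(v)=\sum_i h_i(v)^2$ for all $v\in V$ for some polynomials $h_i$ of degree $\le k$. The Theta rank of $V$ is the smallest $k\ge 0$ such that every linear function nonnegative on $V$ is $k$-sos. For $\ell$ nonnegative on $V$, $\{v\in V:\ell(v)=0\}$ is a face; inclusion-maximal faces different from $V$ are facets and the corresponding $\ell$ facet-defining. The levelness of $V$ is the smallest $k$ such that every facet-defining linear function takes at most $k$ distinct values on $V$. *)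

From HB Require Import structures.
From mathcomp Require Import all_boot all_order all_algebra.
From mathcomp Require Import reals.
Set Implicit Arguments. Unset Strict Implicit. Unset Printing Implicit Defensive.
Import Order.TTheory GRing.Theory Num.Theory.
Local Open Scope ring_scope.

(* list of points (its set of elements).                                     *)
Section PointConfig.
Variables (R : realType) (I : finType).
Notation pt := {ffun I -> R}.

Definition aff (a0 : R) (a : pt) (v : pt) : R := a0 + \sum_i a i * v i.

(* Exponent vectors of monomials of degree <= k (each exponent is <= k). *)
Definition expvec (k : nat) := {ffun I -> 'I_k.+1}.

(* The polynomial function of degree <= k with coefficients c, i.e.
   v |-> sum_{m, |m| <= k} c_m * prod_i v_i^{m_i}. Every real polynomial of
   degree <= k in the coordinates arises this way. *)
Definition polyfun (k : nat) (c : expvec k -> R) (v : pt) : R :=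
  \sum_(m : expvec k | (\sum_i (m i : nat) <= k)%N) c m * \prod_i v i ^+ m i.

Definition nonneg_on (V : seq pt) (l : pt -> R) : Prop :=
  forall v, v \in V -> 0 <= l v.

Definition k_sos (V : seq pt) (k : nat) (l : pt -> R) : Prop :=
  exists hs : seq (expvec k -> R),
    forall v, v \in V -> l v = \sum_(h <- hs) polyfun h v ^+ 2.

Definition all_lin_k_sos (V : seq pt) (k : nat) : Prop :=
  forall (a0 : R) (a : pt), nonneg_on V (aff a0 a) -> k_sos V k (aff a0 a).

(* Theta rank of V is at most k: the smallest j with the above property is
   <= k, i.e. some j <= k has the property. *)
Definition theta_rank_le (V : seq pt) (k : nat) : Prop :=
  exists2 j, (j <= k)%N & all_lin_k_sos V j.

Definition is_face (V : seq pt) (F : pt -> bool) : Prop :=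
  exists (a0 : R) (a : pt), nonneg_on V (aff a0 a) /\
    forall v, F v = (v \in V) && (aff a0 a v == 0).

Definition proper_face (V : seq pt) (F : pt -> bool) : Prop :=
  is_face V F /\ exists2 v, v \in V & ~~ F v.

Definition is_facet (V : seq pt) (F : pt -> bool) : Prop :=
  proper_face V F /\
  forall G, proper_face V G -> (forall v, F v -> G v) -> (forall v, G v -> F v).

Definition facet_defining (V : seq pt) (a0 : R) (a : pt) : Prop :=
  nonneg_on V (aff a0 a) /\
  is_facet V (fun v => (v \in V) && (aff a0 a v == 0)).

Definition all_facets_j_level (V : seq pt) (j : nat) : Prop :=
  forall (a0 : R) (a : pt), facet_defining V a0 a ->
    (size (undup [seq aff a0 a v | v <- V]) <= j)%N.

Definition levelness_le (V : seq pt) (k : nat) : Prop :=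
  exists2 j, (j <= k)%N & all_facets_j_level V j.

End PointConfig.

Section Matroids.
Variable E : finType.

Definition is_matroid (S : {set E}) (Bs : {set {set E}}) : Prop :=
  [/\ exists B, B \in Bs,
      forall B, B \in Bs -> B \subset S &
      forall B1 B2 x, B1 \in Bs -> B2 \in Bs -> x \in B1 :\: B2 ->
        exists2 y, y \in B2 :\: B1 & (y |: (B1 :\ x)) \in Bs].

Definition is_coloop (Bs : {set {set E}}) (e : E) : bool := [forall B in Bs, e \in B].
Definition is_loop (Bs : {set {set E}}) (e : E) : bool := [forall B in Bs, e \notin B].

Definition deletion (Bs : {set {set E}}) (e : E) : {set {set E}} :=
  if is_coloop Bs e then [set B :\ e | B in Bs] else [set B in Bs | e \notin B].

Definition contraction (Bs : {set {set E}}) (e : E) : {set {set E}} :=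
  if is_loop Bs e then Bs else [set B :\ e | B in [set B in Bs | e \in B]].

Inductive minor_of (S : {set E}) (Bs : {set {set E}}) :
  {set E} -> {set {set E}} -> Prop :=
| minor_refl : minor_of S Bs S Bs
| minor_del S' Bs' e : minor_of S Bs S' Bs' -> e \in S' ->
    minor_of S Bs (S' :\ e) (deletion Bs' e)
| minor_con S' Bs' e : minor_of S Bs S' Bs' -> e \in S' ->
    minor_of S Bs (S' :\ e) (contraction Bs' e).

Definition base_config (R : realType) (S : {set E}) (Bs : {set {set E}})
  : seq {ffun {x : E | x \in S} -> R} :=
  [seq [ffun i : {x : E | x \in S} => if val i \in B then 1 else 0] | B : {set E} <- enum Bs].

End Matroids.

From HB Require Import structures.
From mathcomp Require Import all_boot all_order all_algebra.
From mathcomp Require Import reals.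
From mathcomp Require Import ring.
From Stdlib Require Import Classical.
Set Implicit Arguments. Unset Strict Implicit. Unset Printing Implicit Defensive.
Import Order.TTheory GRing.Theory Num.Theory.
Local Open Scope ring_scope.

(* Deleting or contracting e keeps exactly the bases B with (e \in B) = b, for a
   suitable b, and removes e from them. So the base configuration of the minor is
   the face {x_e = b} of the base configuration V, with the coordinate e dropped.

   Both bounds pass to a face F = {g = 0} of V (g >= 0 on V): a linear function l
   nonnegative on F becomes nonnegative on V after adding a large multiple T g,
   and l + T g agrees with l on F. For theta rank, restrict the sums of squares
   from V to F. For levelness, push l + T g to a facet-defining M of V that is
   still positive at a point of F; M vanishes on the facet of F cut out by l, so
   M is a nonzero multiple of l on F, and l takes at most as many values on F as
   M takes on V.

   Both bounds also pass from F to its image after dropping the coordinate e,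
   which is constant on F: substitute that constant into the polynomials, and
   note that facets correspond under the projection. *)

Lemma count_lt_sub_in (T : eqType) (a1 a2 : pred T) (s : seq T) :
  {in s, subpred a1 a2} -> (exists2 x, x \in s & a2 x && ~~ a1 x) ->
  (count a1 s < count a2 s)%N.
Proof.
move=> sub12 [x xs /andP[a2x a1x]].
have -> : count a1 s = count (predI a1 a2) s.
  by apply: eq_in_count => y ys /=; case: (boolP (a1 y)) => //= a1y; rewrite sub12.
rewrite -[count a2 s]size_filter -(count_predC a1 (filter a2 s)) !count_filter.
rewrite -[X in (X < _)%N]addn0.
by rewrite ltn_add2l -has_count; apply/hasP; exists x => //=; rewrite a1x a2x.
Qed.

Lemma seq_argmin (T : eqType) (R : realDomainType) (s : seq T) (f : T -> R) :
  s != [::] -> exists2 x, x \in s & {in s, forall y, f x <= f y}.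
Proof.
elim: s => // a s IH _; have [->|/IH[x xs xmin]] := eqVneq s [::].
  by exists a => [|y]; rewrite ?inE // => /eqP->.
have [fax|fxa] := lerP (f a) (f x).
  exists a; rewrite ?mem_head // => y; rewrite inE => /predU1P[->//|/xmin].
  exact: le_trans.
exists x; rewrite ?inE ?xs ?orbT // => y; rewrite inE => /predU1P[->|/xmin//].
exact: ltW.
Qed.

Lemma ratio_test (T : eqType) (R : realFieldType) (V : seq T) (f g : T -> R) :
  {in V, forall v, 0 <= f v} -> (exists2 w, w \in V & g w < 0) ->
  exists2 s, 0 <= s & {in V, forall v, 0 <= f v + s * g v} /\
    exists2 w, w \in V & g w < 0 /\ f w + s * g w = 0.
Proof.
move=> f_ge0 [w0 w0V gw0].
have /(seq_argmin (fun w => f w / - g w)) [w] : [seq w <- V | g w < 0] != [::].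
  by apply/eqP => /(congr1 (fun s => w0 \in s)); rewrite mem_filter gw0 w0V.
rewrite mem_filter => /andP[gw wV] wmin.
exists (f w / - g w); first by rewrite divr_ge0 ?f_ge0 // oppr_ge0 ltW.
split=> [v vV|]; last first.
  exists w => //; split => //; field; exact: ltr0_neq0.
have [gv|gv] := ltP (g v) 0; last first.
  by rewrite addr_ge0 ?f_ge0 // mulr_ge0 // divr_ge0 ?f_ge0 // oppr_ge0 ltW.
have := wmin v; rewrite mem_filter gv vV => /(_ isT).
by rewrite ler_pdivlMr ?oppr_gt0 // mulrN -subr_ge0 opprK.
Qed.

Section Facets.
Variables (R : realType) (I : finType).
Notation pt := {ffun I -> R}.
Implicit Types (V : seq pt) (p v w : pt).

Lemma aff_addZ b0 (b : pt) c0 (c : pt) (s : R) v :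
  aff (b0 + s * c0) [ffun i => b i + s * c i] v = aff b0 b v + s * aff c0 c v.
Proof.
rewrite /aff mulrDr addrACA mulr_sumr -big_split /=; congr (_ + _).
by apply: eq_bigr => i _; rewrite ffunE mulrDl mulrA.
Qed.

Lemma facet_proportional V a0 (a : pt) m0 (m : pt) :
  facet_defining V a0 a ->
  {in V, forall w, aff a0 a w = 0 -> aff m0 m w = 0} ->
  exists lam, {in V, forall w, aff m0 m w = lam * aff a0 a w}.
Proof.
move=> [a_ge0 [_ a_max]] zero_am.
have scaled_neg t : (exists2 w, w \in V & t * aff m0 m w < 0) ->
    exists lam, {in V, forall w, aff m0 m w = lam * aff a0 a w}.
  move=> /(ratio_test (g := fun w => t * aff m0 m w) a_ge0).
  move=> [s s_ge0 [comb_ge0 [w wV [tmw comb_w]]]].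
  have aw0 : aff a0 a w != 0.
    by apply: contraTneq tmw => /(zero_am w wV) ->; rewrite mulr0 ltxx.
  have st0 : s * t != 0.
    by apply: contraNneq aw0 => st0; rewrite -comb_w mulrA st0 mul0r addr0.
  pose comb := aff (a0 + (s * t) * m0) [ffun i => a i + (s * t) * m i].
  have combE v : comb v = aff a0 a v + s * (t * aff m0 m v).
    by rewrite /comb aff_addZ mulrA.
  have [comb0|/allPn[u uV comb_u]] := boolP (all (fun v => comb v == 0) V).
    exists (- (s * t)^-1) => v vV; move/allP/(_ v vV): comb0.
    rewrite combE mulrA addrC addr_eq0 => /eqP comb0.
    by rewrite -[aff m0 m v](mulKf st0) comb0 mulrN mulNr.
  have comb_face : proper_face V (fun v => (v \in V) && (comb v == 0)).
    split; last by exists u; rewrite // uV.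
    exists (a0 + (s * t) * m0), [ffun i => a i + (s * t) * m i].
    by split => // v vV; rewrite -/comb combE comb_ge0.
  have zero_comb v : (v \in V) && (aff a0 a v == 0) -> (v \in V) && (comb v == 0).
    move=> /andP[vV /eqP av].
    by rewrite vV combE av (zero_am v vV av) !mulr0 addr0 eqxx.
  have := a_max _ comb_face zero_comb w.
  by rewrite wV combE comb_w eqxx (negbTE aw0) => /(_ isT).
have [/hasP[w wV mw]|/hasPn m_ge0] := boolP (has (fun w => aff m0 m w < 0) V).
  by apply: (scaled_neg 1); exists w; rewrite ?mul1r.
have [/hasP[w wV mw]|/hasPn m_le0] := boolP (has (fun w => 0 < aff m0 m w) V).
  by apply: (scaled_neg (-1)); exists w; rewrite ?mulN1r ?oppr_lt0.
exists 0 => w wV; rewrite mul0r; apply/eqP; rewrite eq_le.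
by rewrite leNgt m_le0 //= leNgt m_ge0.
Qed.

Lemma facet_enlarge V p b0 (b : pt) :
  p \in V -> nonneg_on V (aff b0 b) -> 0 < aff b0 b p -> ~ facet_defining V b0 b ->
  exists c0 (c : pt), [/\ nonneg_on V (aff c0 c), 0 < aff c0 c p,
    {in V, forall v, aff b0 b v = 0 -> aff c0 c v = 0} &
    exists2 u, u \in V & aff b0 b u != 0 /\ aff c0 c u = 0].
Proof.
move=> pV b_ge0 bp not_facet.
have [G [[[m0 [m [m_ge0 GE]]] [u' u'V Gu']] sub_G [u Gu not_Zu]]] :
    exists G, [/\ proper_face V G, forall v, (v \in V) && (aff b0 b v == 0) -> G v &
      exists2 u, G u & ~~ ((u \in V) && (aff b0 b u == 0))].
  apply: NNPP => noG; apply: not_facet; split => //; split.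
    split; first by exists b0, b.
    by exists p; rewrite // pV /= lt0r_neq0.
  move=> G G_face sub_G v Gv; apply: contraT => not_Zv.
  by case: noG; exists G; split => //; exists v.
have zero_bm : {in V, forall v, aff b0 b v = 0 -> aff m0 m v = 0}.
  by move=> v vV bv; move: (sub_G v); rewrite vV bv eqxx GE => /(_ isT)/andP[_ /eqP].
have [uV mu] : u \in V /\ aff m0 m u = 0 by move: Gu; rewrite GE => /andP[-> /eqP].
have [mp0|mp] := eqVneq (aff m0 m p) 0; last first.
  exists m0, m; split => //; first by rewrite lt_def mp m_ge0.
  by exists u => //; split => //; move: not_Zu; rewrite uV.
have mu'_neg : - aff m0 m u' < 0.
  by rewrite oppr_lt0 lt_def m_ge0 // andbT; move: Gu'; rewrite GE u'V.
have [s _ [comb_ge0 [w wV [mw comb_w]]]] :=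
  ratio_test (g := fun v => - aff m0 m v) b_ge0 (ex_intro2 _ _ u' u'V mu'_neg).
have combE v : aff (b0 + - s * m0) [ffun i => b i + - s * m i] v =
    aff b0 b v + s * - aff m0 m v by rewrite aff_addZ mulNr mulrN.
exists (b0 + - s * m0), [ffun i => b i + - s * m i]; split.
- by move=> v vV; rewrite combE comb_ge0.
- by rewrite combE mp0 oppr0 mulr0 addr0.
- by move=> v vV bv; rewrite combE bv (zero_bm v vV bv) oppr0 mulr0 addr0.
exists w => //; split; last by rewrite combE.
by apply: contraTneq mw => /(zero_bm w wV) ->; rewrite oppr0 ltxx.
Qed.

Lemma facet_extension V p b0 (b : pt) :
  p \in V -> nonneg_on V (aff b0 b) -> 0 < aff b0 b p ->
  exists M0 (M : pt), [/\ facet_defining V M0 M, 0 < aff M0 M p &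
    {in V, forall v, aff b0 b v = 0 -> aff M0 M v = 0}].
Proof.
move=> pV; have [n] := ubnP (count (fun v => aff b0 b v != 0) V).
elim: n b0 b => // n IH b0 b; rewrite ltnS => b_count b_ge0 bp.
have [b_facet|not_facet] := classic (facet_defining V b0 b); first by exists b0, b; split.
have [c0 [c [c_ge0 cp zero_bc [u uV [bu cu]]]]] := facet_enlarge pV b_ge0 bp not_facet.
have [|M0 [M [M_facet Mp zero_cM]]] := IH c0 c _ c_ge0 cp.
  apply: leq_trans b_count; apply: count_lt_sub_in; last by exists u; rewrite //= bu cu eqxx.
  by move=> v vV; apply: contra => /eqP /(zero_bc v vV) ->.
by exists M0, M; split => // v vV /(zero_bc v vV) /(zero_cM v vV).
Qed.

End Facets.

Section FaceOf.
Variables (R : realType) (I : finType).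
Notation pt := {ffun I -> R}.

Definition face_of (V : seq pt) g0 (g : pt) := [seq v <- V | aff g0 g v == 0].

Variables (V : seq pt) (g0 : R) (g : pt).
Hypothesis g_ge0 : nonneg_on V (aff g0 g).
Let F := face_of V g0 g.

Definition face_weight a0 (a : pt) := \sum_(u <- V) `|aff a0 a u| / aff g0 g u.

Lemma face_lift_ge0 a0 (a : pt) : nonneg_on F (aff a0 a) ->
  nonneg_on V (aff (a0 + face_weight a0 a * g0) [ffun i => a i + face_weight a0 a * g i]).
Proof.
move=> a_ge0 v vV; rewrite aff_addZ.
have [gv0|gv_ne0] := eqVneq (aff g0 g v) 0.
  by rewrite gv0 mulr0 addr0 a_ge0 // mem_filter gv0 eqxx.
have gv_gt0 : 0 < aff g0 g v by rewrite lt0r gv_ne0 g_ge0.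
have : `|aff a0 a v| / aff g0 g v <= face_weight a0 a.
  rewrite /face_weight (big_rem v) //= lerDl big_seq.
  by apply: sumr_ge0 => u /mem_rem uV; rewrite divr_ge0 ?g_ge0.
by rewrite ler_pdivrMr // => /lerNnormlW; rewrite -subr_ge0 opprK.
Qed.

Lemma face_theta k : all_lin_k_sos V k -> all_lin_k_sos F k.
Proof.
move=> V_sos a0 a a_ge0; have [hs hsE] := V_sos _ _ (face_lift_ge0 a_ge0).
exists hs => v; rewrite mem_filter => /andP[/eqP gv vV].
by rewrite -hsE // aff_addZ gv mulr0 addr0.
Qed.

Lemma face_level j : all_facets_j_level V j -> all_facets_j_level F j.
Proof.
move=> V_level a0 a a_facet; have [a_ge0 [[_ [p pF ap]] _]] := a_facet.
move: (pF); rewrite mem_filter => /andP[/eqP gp pV]; rewrite pF /= in ap.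
have Lp : 0 < aff (a0 + face_weight a0 a * g0) [ffun i => a i + face_weight a0 a * g i] p.
  by rewrite aff_addZ gp mulr0 addr0 lt0r ap a_ge0.
have [M0 [M [M_facet Mp zero_LM]]] := facet_extension pV (face_lift_ge0 a_ge0) Lp.
have [lam lamE] : exists lam, {in F, forall w, aff M0 M w = lam * aff a0 a w}.
  apply: facet_proportional a_facet _ => w; rewrite mem_filter => /andP[/eqP gw wV] aw.
  by apply: zero_LM => //; rewrite aff_addZ gw aw mulr0 addr0.
have lam0 : lam != 0 by apply: contraTneq Mp => lam0; rewrite lamE // lam0 mul0r ltxx.
have values : [seq aff M0 M w | w <- F] = map ( *%R lam) [seq aff a0 a w | w <- F].
  by rewrite -map_comp; apply/eq_in_map => w wF; exact: lamE.
rewrite -(size_map ( *%R lam)) -undup_map_inj; last exact: mulfI.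
rewrite -values; apply: leq_trans (V_level _ _ M_facet).
apply: uniq_leq_size (undup_uniq _) _ => x; rewrite !mem_undup => /mapP[w wF ->].
by apply: map_f; move: wF; rewrite mem_filter => /andP[].
Qed.

End FaceOf.

Section CoordinateSlice.
Variables (R : realType) (I J : finType) (sigma : J -> I) (tau : I -> option J) (e0 : I).
Hypothesis tau_sigma : pcancel sigma tau.
Hypothesis sigma_tau : forall i, i != e0 -> omap sigma (tau i) = Some i.
Hypothesis tau_e0 : tau e0 = None.

Lemma big_e0_sigma (T : Type) (idx : T) (op : Monoid.com_law idx) (F : I -> T) :
  \big[op/idx]_i F i = op (F e0) (\big[op/idx]_j F (sigma j)).
Proof.
rewrite (bigD1 e0) //= (reindex_omap sigma tau sigma_tau); congr (op _ _).
apply: eq_bigl => j; rewrite tau_sigma eqxx andbT.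
by apply/eqP => sigma_j; move: (tau_sigma j); rewrite sigma_j tau_e0.
Qed.

Definition restrv (v : {ffun I -> R}) : {ffun J -> R} := [ffun j => v (sigma j)].
Definition extv (a : {ffun J -> R}) : {ffun I -> R} := [ffun i => oapp a 0 (tau i)].

Lemma aff_extv a0 (a : {ffun J -> R}) (v : {ffun I -> R}) :
  aff a0 (extv a) v = aff a0 a (restrv v).
Proof.
rewrite /aff big_e0_sigma ffunE tau_e0 /= mul0r add0r; congr (_ + _).
by apply: eq_bigr => j _; rewrite !ffunE tau_sigma.
Qed.

Lemma aff_restrv c M0 (M v : {ffun I -> R}) :
  v e0 = c -> aff M0 M v = aff (M0 + M e0 * c) (restrv M) (restrv v).
Proof.
move=> ve0; rewrite /aff big_e0_sigma ve0 addrA; congr (_ + _).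
by apply: eq_bigr => j _; rewrite !ffunE.
Qed.

Definition restr_exp k (m : expvec I k) : expvec J k := [ffun j => m (sigma j)].

(* Coefficients of [h] after substituting the constant [c] for the variable [e0]. *)
Definition subst_coord k (c : R) (h : expvec I k -> R) (m' : expvec J k) : R :=
  \sum_(m : expvec I k | (\sum_i (m i : nat) <= k)%N && (restr_exp m == m'))
    h m * c ^+ m e0.

Lemma polyfun_subst_coord k c (h : expvec I k -> R) (v : {ffun I -> R}) :
  v e0 = c -> polyfun (subst_coord c h) (restrv v) = polyfun h v.
Proof.
move=> ve0; rewrite /polyfun (partition_big (@restr_exp k)
  (fun m' : expvec J k => (\sum_j (m' j : nat) <= k)%N)); last first.
  move=> m; apply: leq_trans; rewrite [X in (_ <= X)%N](big_e0_sigma addn).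
  by rewrite (eq_bigr (fun j => (m (sigma j) : nat))) ?leq_addl // => j _; rewrite ffunE.
apply: eq_bigr => m' _; rewrite mulr_suml; apply: eq_bigr => m /andP[_ /eqP <-].
rewrite -mulrA (@big_e0_sigma R 1 *%R) /= ve0; congr (_ * (_ * _)).
by apply: eq_bigr => j _; rewrite !ffunE.
Qed.

Variables (F : seq {ffun I -> R}) (W : seq {ffun J -> R}) (c : R).
Hypothesis F_e0 : {in F, forall v : {ffun I -> R}, v e0 = c}.
Hypothesis W_restr : W =i map restrv F.

Lemma slice_theta k : all_lin_k_sos F k -> all_lin_k_sos W k.
Proof.
move=> F_sos a0 a a_ge0; have [|hs hsE] := F_sos a0 (extv a).
  by move=> v vF; rewrite aff_extv a_ge0 // W_restr map_f.
exists (map (subst_coord c) hs) => w; rewrite W_restr => /mapP[v vF ->].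
rewrite -aff_extv hsE // big_map; apply: eq_bigr => h _.
by rewrite polyfun_subst_coord // F_e0.
Qed.

Lemma facet_defining_extv a0 (a : {ffun J -> R}) :
  facet_defining W a0 a -> facet_defining F a0 (extv a).
Proof.
move=> a_facet; have [a_ge0 [[_ [w wW aw]] _]] := a_facet.
split=> [v vF|]; first by rewrite aff_extv a_ge0 // W_restr map_f.
split; first split.
- by exists a0, (extv a); split => // v vF; rewrite aff_extv a_ge0 // W_restr map_f.
- move: (wW); rewrite W_restr => /mapP[v vF wE]; exists v => //.
  by rewrite vF aff_extv -wE; rewrite wW in aw.
move=> G [[m0 [m [_ GE]]] [u uF Gu]] sub_G v; rewrite GE => /andP[vF /eqP mv].
have [lam lamE] : exists lam,
    {in W, forall w, aff (m0 + m e0 * c) (restrv m) w = lam * aff a0 a w}.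
  apply: facet_proportional a_facet _ => y; rewrite W_restr => /mapP[x xF ->] ax.
  rewrite -aff_restrv ?F_e0 //.
  by move: (sub_G x); rewrite xF aff_extv ax eqxx GE => /(_ isT)/andP[_ /eqP].
have mE x : x \in F -> aff m0 m x = lam * aff a0 (extv a) x.
  by move=> xF; rewrite aff_extv (aff_restrv _ _ (F_e0 xF)) lamE // W_restr map_f.
have lam0 : lam != 0.
  by apply: contraNneq Gu => lam0; rewrite GE uF mE // lam0 mul0r eqxx.
by rewrite vF /=; move: mv; rewrite mE // => /eqP; rewrite mulf_eq0 (negbTE lam0).
Qed.

Lemma slice_level j : all_facets_j_level F j -> all_facets_j_level W j.
Proof.
move=> F_level a0 a a_facet.
apply: leq_trans (F_level _ _ (facet_defining_extv a_facet)).
apply: uniq_leq_size (undup_uniq _) _ => x; rewrite !mem_undup => /mapP[w].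
by rewrite W_restr => /mapP[v vF ->] ->; rewrite -aff_extv map_f.
Qed.

End CoordinateSlice.

Lemma setD1_notin (T : finType) (A : {set T}) x : x \notin A -> A :\ x = A.
Proof. by move=> xA; apply/setDidPl; rewrite disjoint_sym disjoints1. Qed.

Section MatroidMinors.
Variables (R : realType) (E : finType).

Definition indicator (S B : {set E}) : {ffun {x : E | x \in S} -> R} :=
  [ffun i => if val i \in B then 1 else 0].

Lemma base_configE S Bs : base_config R S Bs = map (indicator S) (enum Bs).
Proof. by []. Qed.

Definition slice_bases (Bs : {set {set E}}) e b := [set B :\ e | B in Bs & (e \in B) == b].

Lemma deletion_slice Bs e : deletion Bs e = slice_bases Bs e (is_coloop Bs e).
Proof.
rewrite /deletion /slice_bases; case: (boolP (is_coloop Bs e)) => coloop.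
  apply/setP => B'; apply/imsetP/imsetP => [[B BB ->]|[B]]; last first.
    by rewrite inE => /andP[BB _] ->; exists B.
  by exists B => //; rewrite inE BB eqb_id; move/forall_inP: coloop; apply.
apply/setP => B'; rewrite inE; apply/andP/imsetP => [[BB eB]|[B]].
  by exists B'; rewrite ?inE ?BB ?setD1_notin //= (negbTE eB).
by rewrite inE => /andP[BB /eqP eB] ->; rewrite setD1_notin ?eB.
Qed.

Lemma contraction_slice Bs e : contraction Bs e = slice_bases Bs e (~~ is_loop Bs e).
Proof.
rewrite /contraction /slice_bases; case: (boolP (is_loop Bs e)) => loop /=.
  apply/setP => B'; apply/idP/imsetP => [BB|[B]].
    have eB : e \notin B' by move/forall_inP: loop; apply.
    by exists B'; rewrite ?setD1_notin // inE BB (negbTE eB).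
  by rewrite inE => /andP[BB /eqP eB] ->; rewrite setD1_notin ?eB.
apply/setP => B'; apply/imsetP/imsetP => -[B];
  by rewrite !inE ?eqb_id => BB ->; exists B; rewrite ?inE ?eqb_id.
Qed.

Section ElementSlice.
Variables (S : {set E}) (e : E) (eS : e \in S).
Let I := {x : E | x \in S}.
Let J := {x : E | x \in S :\ e}.

Definition incl (j : J) : I := exist _ (val j) (subsetP (subD1set S e) _ (valP j)).
Definition retr (i : I) : option J := insub (val i).
Definition pt_e : I := exist _ e eS.

Lemma retr_incl : pcancel incl retr.
Proof. by move=> j; rewrite /retr valK. Qed.

Lemma incl_retr i : i != pt_e -> omap incl (retr i) = Some i.
Proof.
move=> ie; have iSe : val i \in S :\ e.
  by rewrite in_setD1 (valP i) andbT; apply: contra_neq ie => vie; exact: val_inj.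
by rewrite /retr insubT /=; congr Some; apply: val_inj.
Qed.

Lemma retr_e : retr pt_e = None.
Proof. by rewrite /retr insubF // in_setD1 eqxx. Qed.

Definition coord_form (b : bool) : {ffun I -> R} :=
  [ffun i => if i == pt_e then (if b then -1 else 1) else 0].

Lemma aff_coord_form (b : bool) B :
  aff b%:R (coord_form b) (indicator S B) = ((e \in B) != b)%:R.
Proof.
rewrite /aff (bigD1 pt_e) //= big1 => [|i /negbTE ie]; last by rewrite ffunE ie mul0r.
rewrite !ffunE eqxx /=; case: b; case: (e \in B) => /=;
  by rewrite ?mulr1 ?mulr0 ?addr0 ?subrr ?add0r.
Qed.

Lemma restrv_indicator B : restrv incl (indicator S B) = indicator (S :\ e) B.
Proof. by apply/ffunP => j; rewrite !ffunE. Qed.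

Lemma indicator_setD1 B : indicator (S :\ e) (B :\ e) = indicator (S :\ e) B.
Proof.
apply/ffunP => j; rewrite !ffunE in_setD1.
by case: j => x /=; rewrite in_setD1 => /andP[-> _].
Qed.

Variable Bs : {set {set E}}.

Lemma base_config_slice (b : bool) :
  base_config R (S :\ e) (slice_bases Bs e b) =i
  map (restrv incl) (face_of (base_config R S Bs) b%:R (coord_form b)).
Proof.
move=> w; rewrite !base_configE; apply/mapP/mapP => [[B'] | [v]].
  rewrite mem_enum => /imsetP[B /[!inE] /andP[BB eB] -> ->]; exists (indicator S B).
    by rewrite mem_filter aff_coord_form eB eqxx map_f ?mem_enum.
  by rewrite restrv_indicator indicator_setD1.
rewrite mem_filter => /andP[gv /mapP[B /[!mem_enum] BB vE]] ->.
move: gv; rewrite vE aff_coord_form pnatr_eq0 eqb0 negbK => eB; exists (B :\ e).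
  by rewrite mem_enum; apply/imsetP; exists B; rewrite // inE BB.
by rewrite restrv_indicator indicator_setD1.
Qed.

Lemma face_coord (b : bool) :
  {in face_of (base_config R S Bs) b%:R (coord_form b),
    forall v : {ffun I -> R}, v pt_e = b%:R}.
Proof.
move=> v; rewrite mem_filter => /andP[gv /mapP[B _ vE]]; move: gv.
rewrite vE aff_coord_form pnatr_eq0 eqb0 negbK => /eqP <-.
by rewrite ffunE; case: (e \in B).
Qed.

Lemma coord_form_ge0 (b : bool) : nonneg_on (base_config R S Bs) (aff b%:R (coord_form b)).
Proof. by move=> _ /mapP[B _ ->]; rewrite aff_coord_form ler0n. Qed.

Lemma theta_rank_le_slice b k :
  theta_rank_le (base_config R S Bs) k ->
  theta_rank_le (base_config R (S :\ e) (slice_bases Bs e b)) k.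
Proof.
case=> j jk V_sos; exists j => //.
apply: (slice_theta retr_incl incl_retr retr_e (@face_coord b) (@base_config_slice b)).
exact: face_theta (coord_form_ge0 b) _ V_sos.
Qed.

Lemma levelness_le_slice b k :
  levelness_le (base_config R S Bs) k ->
  levelness_le (base_config R (S :\ e) (slice_bases Bs e b)) k.
Proof.
case=> j jk V_level; exists j => //.
apply: (slice_level retr_incl incl_retr retr_e (@face_coord b) (@base_config_slice b)).
exact: face_level (coord_form_ge0 b) _ V_level.
Qed.

End ElementSlice.
End MatroidMinors.

Theorem theorem2p11 (R : realType) (E : finType) (S : {set E})
    (Bs : {set {set E}}) (k : nat) :
  is_matroid S Bs ->
  (theta_rank_le (base_config R S Bs) k ->
     forall S' Bs', minor_of S Bs S' Bs' -> theta_rank_le (base_config R S' Bs') k) /\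
  (levelness_le (base_config R S Bs) k ->
     forall S' Bs', minor_of S Bs S' Bs' -> levelness_le (base_config R S' Bs') k).
Proof.
move=> _; split=> V_bound S' Bs'; elim=> // S2 Bs2 e _ IH eS2;
  rewrite ?deletion_slice ?contraction_slice.
- exact: theta_rank_le_slice.
- exact: theta_rank_le_slice.
- exact: levelness_le_slice.
- exact: levelness_le_slice.
Qed.
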